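(* Let $J$ be a unital Jordan algebra, $\mathfrak g=Lie(J)$, $\hat{\mathfrak g}$ its universal central extension and $\gamma:\hat{\mathfrak g}\to\mathfrak g$ the canonical projection. Let $M$ be a unital $J$-bimodule, $\mathcal A=Lie(J\oplus M)$ where $J\oplus M$ is the null split extension, and let $0\to N\to\mathcal A\xrightarrow{\pi}\mathfrak g\to0$ be the induced exact sequence of Lie algebras. Then there exists a Lie algebra homomorphism $s:\hat{\mathfrak g}\to\mathcal A$ with $\pi\circ s=\gamma$.
   Context: The field $\mathbf k$ has characteristic $\neq2$. $Lie(J)$ denotes the Tits–Kantor–Koecher Lie algebra with short grading $\mathfrak g_{-1}\oplus\mathfrak g_0\oplus\mathfrak g_1$, $\mathfrak g_{-1}=J$, $\mathfrak g_0\subset\mathrm{End}(J)$ spanned by left multiplications $L_a$ and commutators $[L_a,L_b]$, $\mathfrak g_1\subset\mathrm{Hom}(S^2J,J)$ spanned by $P(x,y)=x\circ y$ and $[L_a,P]$, with the natural bracket; it is generated by $\mathfrak g_{-1}\oplus\mathfrak g_1$. The null split extension of $J$ by a bimodule $M$ is the Jordan algebra $J\oplus M$ with $(a_1+m_1)(a_2+m_2)=a_1\circ a_2+a_1\cdot m_2+m_1\cdot a_2$; for unital $M$ (unit of $J$ acts as identity) it is unital. The map $\pi:Lie(J\oplus M)\to Lie(J)$ is induced by the epimorphism $J\oplus M\to J$; its kernel $N$ is an abelian ideal with $N_{-1}=M$. *)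

From HB Require Import structures.
From mathcomp Require Import all_boot all_order all_algebra.
Set Implicit Arguments. Unset Strict Implicit. Unset Printing Implicit Defensive.
Import GRing.Theory.
Local Open Scope ring_scope.

Section Defs.
Variable K : fieldType.

Definition is_jordan (V : lmodType K) (mul : V -> V -> V) : Prop :=
  [/\ forall (c : K) (x y z : V), mul (c *: x + y) z = c *: mul x z + mul y z,
      forall x y : V, mul x y = mul y x &
      forall x y : V, mul (mul (mul x x) y) x = mul (mul x x) (mul y x)].

Definition is_unit (V : lmodType K) (mul : V -> V -> V) (e : V) : Prop :=
  forall x, mul e x = x.

(* Null split extension J (+) M: (a1+m1)(a2+m2) = a1 a2 + a1.m2 + a2.m1
   (Jordan bimodules have m.a = a.m, so a single action is used). *)
Definition nse_mul (J M : lmodType K) (mul : J -> J -> J) (act : J -> M -> M)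
  (u v : J * M) : J * M :=
  (mul u.1 v.1, act u.1 v.2 + act v.1 u.2).

Definition is_bimodule (J M : lmodType K) (mul : J -> J -> J) (act : J -> M -> M)
  : Prop := is_jordan (nse_mul mul act).

(* The Tits-Kantor-Koecher algebra Lie(J) = g_-1 + g_0 + g_1,           *)
(* g_-1 = J, g_0 in End(J), g_1 in Hom(S^2 J, J); an element is a       *)
(* triple (a, D, Q).                                                    *)

Definition tkk (V : lmodType K) : Type := (V * (V -> V) * (V -> V -> V))%type.

Definition tkk_zero (V : lmodType K) : tkk V := (0, fun _ => 0, fun _ _ => 0).
Definition tkk_add (V : lmodType K) (X Y : tkk V) : tkk V :=
  (X.1.1 + Y.1.1, fun x => X.1.2 x + Y.1.2 x, fun x y => X.2 x y + Y.2 x y).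
Definition tkk_scale (V : lmodType K) (c : K) (X : tkk V) : tkk V :=
  (c *: X.1.1, fun x => c *: X.1.2 x, fun x y => c *: X.2 x y).

Definition Lmul (V : lmodType K) (mul : V -> V -> V) (a : V) : V -> V :=
  fun x => mul a x.
Definition ecomm (V : lmodType K) (D1 D2 : V -> V) : V -> V :=
  fun x => D1 (D2 x) - D2 (D1 x).
Definition dact (V : lmodType K) (D : V -> V) (Q : V -> V -> V) : V -> V -> V :=
  fun x y => D (Q x y) - Q (D x) y - Q x (D y).

(* The natural graded bracket: [D,a] = D a, [D1,D2] = D1 D2 - D2 D1,
   [Q,a] = Q(a,-), [D,Q] = D.Q, [g_1,g_1] = 0 (short grading). *)
Definition tkk_br (V : lmodType K) (X Y : tkk V) : tkk V :=
  let: (a1, D1, Q1) := X in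
  let: (a2, D2, Q2) := Y in
  (D1 a2 - D2 a1,
   fun x => ecomm D1 D2 x + Q1 a2 x - Q2 a1 x,
   fun x y => dact D1 Q2 x y - dact D2 Q1 x y).

Definition in_span1 (V : lmodType K) (gens : (V -> V) -> Prop) (D : V -> V) : Prop :=
  exists n (c : 'I_n -> K) (g : 'I_n -> V -> V),
    (forall i, gens (g i)) /\ forall x, D x = \sum_(i < n) c i *: g i x.
Definition in_span2 (V : lmodType K) (gens : (V -> V -> V) -> Prop)
  (Q : V -> V -> V) : Prop :=
  exists n (c : 'I_n -> K) (g : 'I_n -> V -> V -> V),
    (forall i, gens (g i)) /\ forall x y, Q x y = \sum_(i < n) c i *: g i x y.

Definition g0_gen (V : lmodType K) (mul : V -> V -> V) (D : V -> V) : Prop :=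
  (exists a, forall x, D x = Lmul mul a x) \/
  (exists a b, forall x, D x = ecomm (Lmul mul a) (Lmul mul b) x).
(* generators of g_1: P(x,y) = x o y and [L_a, P] *)
Definition g1_gen (V : lmodType K) (mul : V -> V -> V) (Q : V -> V -> V) : Prop :=
  (forall x y, Q x y = mul x y) \/
  (exists a, forall x y, Q x y = dact (Lmul mul a) mul x y).

Definition in_Lie (V : lmodType K) (mul : V -> V -> V) (X : tkk V) : Prop :=
  in_span1 (g0_gen mul) X.1.2 /\ in_span2 (g1_gen mul) X.2.

Definition tkk_proj (J M : lmodType K) (X : tkk (J * M)%type) : tkk J :=
  (X.1.1.1, fun x => (X.1.2 (x, 0)).1, fun x y => (X.2 (x, 0) (y, 0)).1).

End Defs.

Record lieAlgType (K : fieldType) := LieAlg {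
  lie_sort :> lmodType K;
  lie_br : lie_sort -> lie_sort -> lie_sort;
  lie_brDl : forall (c : K) (x y z : lie_sort),
      lie_br (c *: x + y) z = c *: lie_br x z + lie_br y z;
  lie_brDr : forall (c : K) (x y z : lie_sort),
      lie_br z (c *: x + y) = c *: lie_br z x + lie_br z y;
  lie_alt : forall x : lie_sort, lie_br x x = 0;
  lie_jacobi : forall x y z : lie_sort,
      lie_br x (lie_br y z) + lie_br y (lie_br z x) + lie_br z (lie_br x y) = 0
}.
Arguments lie_br {K} _ _ _.

Section Ext.
Variable K : fieldType.

Definition lie_hom (G H : lieAlgType K) (f : G -> H) : Prop :=
  (forall (c : K) x y, f (c *: x + y) = c *: f x + f y) /\
  (forall x y, f (lie_br G x y) = lie_br H (f x) (f y)).

Definition tkk_hom (V : lmodType K) (mul : V -> V -> V) (G : lieAlgType K)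
  (f : G -> tkk V) : Prop :=
  [/\ forall (c : K) x y, f (c *: x + y) = tkk_add (tkk_scale c (f x)) (f y),
      forall x, in_Lie mul (f x) &
      forall x y, f (lie_br G x y) = tkk_br (f x) (f y)].

Definition central_ext (V : lmodType K) (mul : V -> V -> V) (E : lieAlgType K)
  (phi : E -> tkk V) : Prop :=
  [/\ tkk_hom mul phi,
      forall X, in_Lie mul X -> exists e, phi e = X &
      forall z, phi z = tkk_zero V -> forall e, lie_br E z e = 0].

Definition universal_central_ext (V : lmodType K) (mul : V -> V -> V)
  (G : lieAlgType K) (gamma : G -> tkk V) : Prop :=
  central_ext mul gamma /\
  forall (E : lieAlgType K) (phi : E -> tkk V), central_ext mul phi ->
    exists f : G -> E, [/\ lie_hom f, (forall x, phi (f x) = gamma x) &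
      forall f' : G -> E, lie_hom f' -> (forall x, phi (f' x) = gamma x) ->
        forall x, f' x = f x].

End Ext.

(* The elements of Lie(J (+) M) lifted from Lie(J), namely
   (a, L_b + sum_i c_i [L_(p_i), L_(q_i)], [L_d, P]) with a, b, d, p_i, q_i in J,
   form a subalgebra E: the linearized Jordan identity makes every [L_p, L_q] a
   derivation and gives [L_a, [L_b, P]] = - [L_(ab), P], so brackets of lifts are lifts,
   given by the same formulas as in Lie(J). Hence pi maps E onto Lie(J). Since J is
   unital, an element of E killed by pi is an inner derivation D = sum_i c_i [L_(p_i), L_(q_i)]
   vanishing on J, and such a D commutes with every lift because [D, L_p] = L_(Dp) and
   [D, [L_p, P]] = [L_(Dp), P]. Thus pi restricted to E is a central extension of Lie(J),
   and the universal property of gamma gives s : G -> E, a subalgebra of Lie(J (+) M). *)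

From HB Require Import structures.
From mathcomp Require Import all_boot all_order all_algebra.
From mathcomp Require Import ring boolp.
Set Implicit Arguments. Unset Strict Implicit. Unset Printing Implicit Defensive.
Import GRing.Theory.
Local Open Scope ring_scope.

(** * Linear identities *)

Definition trivext (V : zmodType) : Type := (int * V)%type.
HB.instance Definition _ (V : zmodType) := GRing.Zmodule.on (trivext V).

Section TrivialExtension.
Variable V : zmodType.

Definition trivext_mul (x y : trivext V) : trivext V :=
  (x.1 * y.1, y.2 *~ x.1 + x.2 *~ y.1).

Lemma trivext_mulA : associative trivext_mul.
Proof.
move=> [a u] [b v] [c w]; rewrite /trivext_mul /= mulrA; congr pair.
by rewrite !mulrzDl !mulrzA -!addrA mulrzAC (mulrzAC c a v).
Qed.

Lemma trivext_mulC : commutative trivext_mul.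
Proof. by move=> [a u] [b v]; rewrite /trivext_mul /= mulrC addrC. Qed.

Lemma trivext_mul1 : left_id (1, 0) trivext_mul.
Proof. by move=> [a u]; rewrite /trivext_mul /= mul1r mul0rz addr0. Qed.

Lemma trivext_mulDl : left_distributive trivext_mul +%R.
Proof.
move=> [a u] [b v] [c w]; rewrite /trivext_mul /= mulrDl; congr pair.
by rewrite mulrzDl mulrzDr_tmp addrACA.
Qed.

Lemma trivext_one_neq0 : (1, 0) != 0 :> trivext V.
Proof. by apply/eqP; case. Qed.

HB.instance Definition _ := GRing.Zmodule_isComNzRing.Build (trivext V)
  trivext_mulA trivext_mulC trivext_mul1 trivext_mulDl trivext_one_neq0.

Definition trivext_in (v : V) : trivext V := (0, v).

Lemma trivext_in_additive : zmod_morphism trivext_in.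
Proof. by []. Qed.

HB.instance Definition _ :=
  GRing.isZmodMorphism.Build V (trivext V) trivext_in trivext_in_additive.

Lemma trivext_in_inj : injective trivext_in.
Proof. by move=> x y []. Qed.

End TrivialExtension.

(* [ring] handles additive morphisms into commutative rings, so it proves any
   identity of a Z-module once it is pushed into the trivial extension. *)
Ltac zmodring := apply: trivext_in_inj; ring.

Lemma eq_lincomb (V : zmodType) (k1 k2 k3 : int) (a1 b1 a2 b2 a3 b3 x y : V) :
  a1 = b1 -> a2 = b2 -> a3 = b3 ->
  x - y = (a1 - b1) *~ k1 + (a2 - b2) *~ k2 + (a3 - b3) *~ k3 -> x = y.
Proof. by move=> -> -> -> /eqP; rewrite !subrr !mul0rz !addr0 subr_eq0 => /eqP. Qed.
Arguments eq_lincomb {V} k1 k2 k3 {a1 b1 a2 b2 a3 b3 x y}.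

Lemma twice_inj (K : fieldType) (V : lmodType K) (x y : V) :
  (2%:R : K) != 0 -> x *+ 2 = y *+ 2 -> x = y.
Proof.
move=> two_neq0 eq2; apply/eqP; rewrite -subr_eq0.
have: (2%:R : K) *: (x - y) = 0 by rewrite scaler_nat mulrnBl eq2 subrr.
by move/eqP; rewrite scaler_eq0 (negbTE two_neq0).
Qed.

Section LinearFun.
Variables (K : fieldType) (V W : lmodType K) (f : V -> W) (f_lin : linear f).

Lemma linfB x y : f (x - y) = f x - f y.
Proof. exact: zmod_morphism_linear f_lin x y. Qed.
Lemma linf0 : f 0 = 0.
Proof. by rewrite -(subrr 0) linfB subrr. Qed.
Lemma linfN x : f (- x) = - f x.
Proof. by rewrite -sub0r linfB linf0 sub0r. Qed.
Lemma linfD x y : f (x + y) = f x + f y.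
Proof. by have := linfB x (- y); rewrite opprK linfN opprK. Qed.
Lemma linfZ c x : f (c *: x) = c *: f x.
Proof. by rewrite -[c *: x]addr0 f_lin linf0 addr0. Qed.

End LinearFun.

Definition symbilinear (K : fieldType) (V : lmodType K) (Q : V -> V -> V) : Prop :=
  (forall z, linear (Q^~ z)) /\ (forall x y, Q x y = Q y x).

Section SymBilinear.
Variables (K : fieldType) (V : lmodType K) (Q : V -> V -> V) (Q_bil : symbilinear Q).

Lemma bilC x y : Q x y = Q y x. Proof. by case: Q_bil. Qed.
Lemma bil_linl z : linear (Q^~ z). Proof. by case: Q_bil. Qed.
Lemma bil_linr z : linear (Q z).
Proof. by move=> c x y; rewrite !(bilC z) bil_linl. Qed.

Lemma bilDl x y z : Q (x + y) z = Q x z + Q y z. Proof. exact: (linfD (bil_linl z) x y). Qed.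
Lemma bilDr x y z : Q z (x + y) = Q z x + Q z y. Proof. exact: (linfD (bil_linr z) x y). Qed.
Lemma bilNl x z : Q (- x) z = - Q x z. Proof. exact: (linfN (bil_linl z) x). Qed.
Lemma bilNr x z : Q z (- x) = - Q z x. Proof. exact: (linfN (bil_linr z) x). Qed.
Lemma bilBl x y z : Q (x - y) z = Q x z - Q y z. Proof. exact: (linfB (bil_linl z) x y). Qed.
Lemma bilBr x y z : Q z (x - y) = Q z x - Q z y. Proof. exact: (linfB (bil_linr z) x y). Qed.
Lemma bilZl c x z : Q (c *: x) z = c *: Q x z. Proof. exact: (linfZ (bil_linl z) c x). Qed.
Lemma bilZr c x z : Q z (c *: x) = c *: Q z x. Proof. exact: (linfZ (bil_linr z) c x). Qed.
Lemma bil0l z : Q 0 z = 0. Proof. exact: (linf0 (bil_linl z) ). Qed.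
Lemma bil0r z : Q z 0 = 0. Proof. exact: (linf0 (bil_linr z) ). Qed.

End SymBilinear.

(** * Jordan algebras *)

Ltac var_rank t vs :=
  lazymatch vs with
  | t :: _ => constr:(O)
  | _ :: ?r => let n := var_rank t r in constr:(S n)
  end.

Ltac min_rank m t vs :=
  lazymatch t with
  | m ?u ?v =>
      let ku := min_rank m u vs in let kv := min_rank m v vs in
      eval compute in (minn ku kv)
  | _ => var_rank t vs
  end.

(* Orients every product [m u v] of a commutative [m] so that the factor
   containing the earliest variable of [vs] comes first; on multilinear
   monomials in the variables [vs] this is a normal form. *)
Ltac comm_normalize m mC vs :=
  repeat match goal with
  | |- context [m ?u ?v] =>
      let ku := min_rank m u vs in let kv := min_rank m v vs in
      lazymatch eval compute in (kv < ku)%N with true => rewrite (mC u v) end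
  | H : context [m ?u ?v] |- _ =>
      let ku := min_rank m u vs in let kv := min_rank m v vs in
      lazymatch eval compute in (kv < ku)%N with true => rewrite (mC u v) in H end
  end.

Section Jordan.
Variables (K : fieldType) (V : lmodType K) (mul : V -> V -> V).
Hypotheses (mul_jordan : is_jordan mul) (two_neq0 : (2%:R : K) != 0).

Lemma jordan_symbilinear : symbilinear mul.
Proof. by case: mul_jordan => linl comm _; split=> // z c x y; apply: linl. Qed.

Let mulC := bilC jordan_symbilinear.
Let mul_expand := (bilDl jordan_symbilinear, bilDr jordan_symbilinear,
  bilBl jordan_symbilinear, bilBr jordan_symbilinear,
  bilNl jordan_symbilinear, bilNr jordan_symbilinear, @opprK V).

Lemma jordan_id x y : mul (mul (mul x x) y) x = mul (mul x x) (mul y x).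
Proof. by case: mul_jordan. Qed.

Lemma jordan_id_lin1 x y z : mul (mul (mul x x) y) z + mul (mul (mul x z) y) x *+ 2
  = mul (mul x z) (mul y x) *+ 2 + mul (mul x x) (mul y z).
Proof.
have j1 := jordan_id (x + z) y; have j2 := jordan_id (x - z) y; have j3 := jordan_id z y.
rewrite !mul_expand (mulC z x) in j1 j2.
apply: (twice_inj two_neq0); apply: (eq_lincomb 1 (-1) (-2) j1 j2 j3); zmodring.
Qed.

Lemma jordan_id_lin x w z y :
  mul (mul (mul x w) y) z + mul (mul (mul x z) y) w + mul (mul (mul w z) y) x
  = mul (mul x z) (mul y w) + mul (mul w z) (mul y x) + mul (mul x w) (mul y z).
Proof.
have f1 := jordan_id_lin1 (x + w) y z.
have f2 := jordan_id_lin1 x y z; have f3 := jordan_id_lin1 w y z.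
rewrite !mul_expand (mulC w x) in f1.
apply: (twice_inj two_neq0); apply: (eq_lincomb 1 (-1) (-1) f1 f2 f3); zmodring.
Qed.

Definition is_derivation (D : V -> V) : Prop :=
  forall x y, D (mul x y) = mul (D x) y + mul x (D y).

Lemma ecommL_derivation a b : is_derivation (ecomm (Lmul mul a) (Lmul mul b)).
Proof.
move=> x y; rewrite /ecomm /Lmul !mul_expand.
have j1 := jordan_id_lin a x y b; have j2 := jordan_id_lin b x y a.
comm_normalize mul mulC [:: a; b; x; y].
apply: (eq_lincomb 1 (-1) 0 j1 j2 j2); zmodring.
Qed.

Lemma dact_L_LP a b x y :
  dact (Lmul mul a) (dact (Lmul mul b) mul) x y = - dact (Lmul mul (mul a b)) mul x y.
Proof.
rewrite /dact /Lmul !mul_expand.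
have j1 := jordan_id_lin a b x y; have j2 := jordan_id_lin a b y x.
have j3 := jordan_id_lin a x y b.
comm_normalize mul mulC [:: a; b; x; y].
apply: (eq_lincomb (-1) (-1) 1 j1 j2 j3); zmodring.
Qed.

Section Derivation.
Variables (D : V -> V) (D_der : is_derivation D).

Lemma derivation_ecommL u v : ecomm D (Lmul mul u) v = Lmul mul (D u) v.
Proof. by rewrite /ecomm /Lmul D_der addrK. Qed.

Lemma derivation_ecomm_ecommL (D_lin : linear D) u w v :
  ecomm D (ecomm (Lmul mul u) (Lmul mul w)) v
  = ecomm (Lmul mul (D u)) (Lmul mul w) v + ecomm (Lmul mul u) (Lmul mul (D w)) v.
Proof. by rewrite /ecomm /Lmul (linfB D_lin) !D_der !mul_expand; zmodring. Qed.

Lemma derivation_dact (D_lin : linear D) u x y :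
  dact D (dact (Lmul mul u) mul) x y = dact (Lmul mul (D u)) mul x y.
Proof.
by rewrite /dact /Lmul (linfB D_lin) (linfB D_lin) !D_der !mul_expand; zmodring.
Qed.

End Derivation.
End Jordan.

(** * The bracket of Lie(V) *)

Section TKK.
Variables (K : fieldType) (V : lmodType K).

Lemma tkk_eq (X Y : tkk V) : X.1.1 = Y.1.1 -> X.1.2 =1 Y.1.2 ->
  (forall x y, X.2 x y = Y.2 x y) -> X = Y.
Proof.
case: X Y => [[a D] Q] [[a' D'] Q'] /= -> /funext -> hQ.
by congr pair; apply/funext => x; apply/funext => y; apply: hQ.
Qed.

Definition tkk_linear (X : tkk V) : Prop := linear X.1.2 /\ symbilinear X.2.

(* In the short grading [g_1, g_1] = 0, so the Jacobi identity for three
   elements reduces in degree 1 to these symmetry conditions. *)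
Definition g1_compatible (X Y Z : tkk V) : Prop :=
  forall x y, dact (Y.2 X.1.1) Z.2 x y = dact (Z.2 X.1.1) Y.2 x y.

Lemma tkk_br_jacobi (X Y Z : tkk V) :
  tkk_linear X -> tkk_linear Y -> tkk_linear Z ->
  g1_compatible X Y Z -> g1_compatible Y Z X -> g1_compatible Z X Y ->
  tkk_add (tkk_add (tkk_br X (tkk_br Y Z)) (tkk_br Y (tkk_br Z X))) (tkk_br Z (tkk_br X Y))
  = tkk_zero V.
Proof.
case: X Y Z => [[a1 D1] Q1] [[a2 D2] Q2] [[a3 D3] Q3] [/= d1 q1] [/= d2 q2] [/= d3 q3].
rewrite /g1_compatible /= => c1 c2 c3.
have linE := (linfB d1, linfB d2, linfB d3, linfD d1, linfD d2, linfD d3,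
  linfN d1, linfN d2, linfN d3).
have bilE := (bilBl q1, bilBl q2, bilBl q3, bilDl q1, bilDl q2, bilDl q3,
  bilNl q1, bilNl q2, bilNl q3, bilBr q1, bilBr q2, bilBr q3,
  bilDr q1, bilDr q2, bilDr q3, bilNr q1, bilNr q2, bilNr q3).
apply: tkk_eq => [|x|x y] /=; rewrite /ecomm /dact.
- by rewrite !linE (bilC q1 a2 a3) (bilC q2 a3 a1) (bilC q3 a1 a2); zmodring.
- by rewrite !(linE, bilE); zmodring.
- move: (c1 x y) (c2 x y) (c3 x y); rewrite /dact !(linE, bilE) => e1 e2 e3.
  by apply: (eq_lincomb 1 1 1 e1 e2 e3); zmodring.
Qed.

Lemma tkk_br_alt (X : tkk V) : tkk_br X X = tkk_zero V.
Proof.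
by case: X => [[a D] Q]; apply: tkk_eq => /= [|x|x y]; rewrite /ecomm /dact; zmodring.
Qed.

Lemma tkk_brZDl c (X Y Z : tkk V) : tkk_linear Z ->
  tkk_br (tkk_add (tkk_scale c X) Y) Z = tkk_add (tkk_scale c (tkk_br X Z)) (tkk_br Y Z).
Proof.
case: X Y Z => [[a1 D1] Q1] [[a2 D2] Q2] [[a3 D3] Q3] [/= d3 q3].
apply: tkk_eq => /= [|x|x y]; rewrite /ecomm /dact.
- by rewrite d3 ?scalerBr; zmodring.
- by rewrite d3 (bil_linl q3) ?scalerBr ?scalerDr; zmodring.
- rewrite !(linfD d3, linfB d3, linfZ d3, bilDl q3, bilDr q3, bilZl q3, bilZr q3).
  by rewrite ?scalerBr ?scalerDr; zmodring.
Qed.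

Lemma tkk_brZDr c (X Y Z : tkk V) : tkk_linear Z ->
  tkk_br Z (tkk_add (tkk_scale c X) Y) = tkk_add (tkk_scale c (tkk_br Z X)) (tkk_br Z Y).
Proof.
case: X Y Z => [[a1 D1] Q1] [[a2 D2] Q2] [[a3 D3] Q3] [/= d3 q3].
apply: tkk_eq => /= [|x|x y]; rewrite /ecomm /dact.
- by rewrite d3 ?scalerBr; zmodring.
- by rewrite d3 (bil_linl q3) ?scalerBr ?scalerDr; zmodring.
- rewrite !(linfD d3, linfB d3, linfZ d3, bilDl q3, bilDr q3, bilZl q3, bilZr q3).
  by rewrite ?scalerBr ?scalerDr; zmodring.
Qed.

Lemma tkk_addA : associative (@tkk_add K V).
Proof. by move=> X Y Z; apply: tkk_eq => [|x|x y] /=; rewrite addrA. Qed.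
Lemma tkk_addC : commutative (@tkk_add K V).
Proof. by move=> X Y; apply: tkk_eq => [|x|x y] /=; rewrite addrC. Qed.
Lemma tkk_add0 : left_id (tkk_zero V) (@tkk_add K V).
Proof. by move=> X; apply: tkk_eq => [|x|x y] /=; rewrite add0r. Qed.
Lemma tkk_addN : left_inverse (tkk_zero V) (tkk_scale (-1)) (@tkk_add K V).
Proof. by move=> X; apply: tkk_eq => [|x|x y] /=; rewrite scaleN1r addNr. Qed.
Lemma tkk_scaleA a b (X : tkk V) : tkk_scale a (tkk_scale b X) = tkk_scale (a * b) X.
Proof. by apply: tkk_eq => [|x|x y] /=; rewrite scalerA. Qed.
Lemma tkk_scale1 : left_id 1 (@tkk_scale K V).
Proof. by move=> X; apply: tkk_eq => [|x|x y] /=; rewrite scale1r. Qed.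
Lemma tkk_scaleDr : right_distributive (@tkk_scale K V) (@tkk_add K V).
Proof. by move=> a X Y; apply: tkk_eq => [|x|x y] /=; rewrite scalerDr. Qed.
Lemma tkk_scaleDl a b (X : tkk V) :
  tkk_scale (a + b) X = tkk_add (tkk_scale a X) (tkk_scale b X).
Proof. by apply: tkk_eq => [|x|x y] /=; rewrite scalerDl. Qed.

End TKK.

(** * Lifts of Lie(J) along a homomorphism J -> V *)

Section LiftData.
Variables (K : fieldType) (J : lmodType K).

Record lift_data := LiftData { ld_u : J; ld_a : J; ld_s : seq (K * (J * J)); ld_b : J }.

Definition scale_coef (c : K) (t : K * (J * J)) := (c * t.1, t.2).

Definition ld_add (p q : lift_data) : lift_data :=
  LiftData (ld_u p + ld_u q) (ld_a p + ld_a q) (ld_s p ++ ld_s q) (ld_b p + ld_b q).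

Definition ld_scale (c : K) (p : lift_data) : lift_data :=
  LiftData (c *: ld_u p) (c *: ld_a p) (map (scale_coef c) (ld_s p)) (c *: ld_b p).

End LiftData.

(* [lift mul f (LiftData u a s b)] is the element
   (f u, L_(f a) + sum_i c_i [L_(f p_i), L_(f q_i)], [L_(f b), P]) of Lie(V, mul),
   where s lists the triples (c_i, (p_i, q_i)); [g0op] and [g1op] are its
   components of degree 0 and 1. *)
Section LiftMaps.
Variables (K : fieldType) (J V : lmodType K) (mul : V -> V -> V) (f : J -> V).

Definition inner (s : seq (K * (J * J))) (v : V) : V :=
  \sum_(t <- s) t.1 *: ecomm (Lmul mul (f t.2.1)) (Lmul mul (f t.2.2)) v.

Definition g0op (a : J) (s : seq (K * (J * J))) (v : V) : V := mul (f a) v + inner s v.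

Definition g1op (b : J) : V -> V -> V := dact (Lmul mul (f b)) mul.

Definition lift (p : lift_data J) : tkk V :=
  (f (ld_u p), g0op (ld_a p) (ld_s p), g1op (ld_b p)).

Lemma inner_nil v : inner [::] v = 0.
Proof. by rewrite /inner big_nil. Qed.

Lemma inner_cons t s v :
  inner (t :: s) v = t.1 *: ecomm (Lmul mul (f t.2.1)) (Lmul mul (f t.2.2)) v + inner s v.
Proof. by rewrite /inner big_cons. Qed.

Lemma inner_cat s s' v : inner (s ++ s') v = inner s v + inner s' v.
Proof. by rewrite /inner big_cat. Qed.

Lemma inner_scale c s v : inner (map (scale_coef c) s) v = c *: inner s v.
Proof.
by rewrite /inner big_map scaler_sumr; apply: eq_bigr => t _; rewrite scalerA.
Qed.

End LiftMaps.

Section LiftLinear.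
Variables (K : fieldType) (J V : lmodType K) (mul : V -> V -> V) (f : {linear J -> V}).
Hypothesis mul_bil : symbilinear mul.

Let mul_expand := (bilDl mul_bil, bilDr mul_bil, bilBl mul_bil, bilBr mul_bil,
  bilNl mul_bil, bilNr mul_bil, bilZl mul_bil, bilZr mul_bil).

Lemma inner_linear s : linear (inner mul f s).
Proof.
elim: s => [|t s IH] c x y; first by rewrite !inner_nil scaler0 addr0.
rewrite !inner_cons IH /ecomm /Lmul !mul_expand !(scalerDr, scalerN, scalerA) (mulrC c).
by zmodring.
Qed.

Lemma g0op_linear a s : linear (g0op mul f a s).
Proof.
by move=> c x y; rewrite /g0op inner_linear !mul_expand scalerDr; zmodring.
Qed.

Lemma g1op_symbilinear b : symbilinear (g1op mul f b).
Proof.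
split=> [z c x y|x y]; rewrite /g1op /dact /Lmul.
- by rewrite !mul_expand ?scalerBr ?scalerDr; zmodring.
- by rewrite (bilC mul_bil x y) (bilC mul_bil _ y) (bilC mul_bil x); zmodring.
Qed.

Lemma lift_linear p : tkk_linear (lift mul f p).
Proof. split; [exact: g0op_linear | exact: g1op_symbilinear]. Qed.

Lemma g0op_add a a' s s' v :
  g0op mul f (a + a') (s ++ s') v = g0op mul f a s v + g0op mul f a' s' v.
Proof. by rewrite /g0op inner_cat linearD !mul_expand; zmodring. Qed.

Lemma g0op_scale c a s v :
  g0op mul f (c *: a) (map (scale_coef c) s) v = c *: g0op mul f a s v.
Proof. by rewrite /g0op inner_scale linearZ !mul_expand scalerDr. Qed.

Lemma g1op_add b b' x y : g1op mul f (b + b') x y = g1op mul f b x y + g1op mul f b' x y.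
Proof. by rewrite /g1op /dact /Lmul linearD !mul_expand; zmodring. Qed.

Lemma g1op_sub b b' x y : g1op mul f (b - b') x y = g1op mul f b x y - g1op mul f b' x y.
Proof. by rewrite /g1op /dact /Lmul (linearB f) !mul_expand; zmodring. Qed.

Lemma g1op_scale c b x y : g1op mul f (c *: b) x y = c *: g1op mul f b x y.
Proof. by rewrite /g1op /dact /Lmul linearZ !mul_expand !(scalerDr, scalerN). Qed.

Lemma lift_add p q : lift mul f (ld_add p q) = tkk_add (lift mul f p) (lift mul f q).
Proof.
by apply: tkk_eq => [|x|x y] /=; [exact: linearD | exact: g0op_add | exact: g1op_add].
Qed.

Lemma lift_scale c p : lift mul f (ld_scale c p) = tkk_scale c (lift mul f p).
Proof.
by apply: tkk_eq => [|x|x y] /=; [exact: linearZ | exact: g0op_scale | exact: g1op_scale].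
Qed.

Lemma lift_zero : lift mul f (LiftData 0 0 [::] 0) = tkk_zero V.
Proof.
apply: tkk_eq => [|x|x y] /=; rewrite /g0op /g1op /dact /Lmul ?inner_nil linear0 //.
  by rewrite addr0 (bil0l mul_bil).
by rewrite !(bil0l mul_bil) (bil0r mul_bil) !subr0.
Qed.

Lemma lift_null p : f (ld_u p) = 0 -> f (ld_a p) = 0 -> f (ld_b p) = 0 ->
  (forall t, t \in ld_s p -> f t.2.1 = 0 \/ f t.2.2 = 0) -> lift mul f p = tkk_zero V.
Proof.
case: p => u a s b /= fu fa fb fs; apply: tkk_eq => [|x|x y] //=.
- rewrite /g0op fa (bil0l mul_bil) add0r /inner big_seq big1 // => t /fs.
  by case=> ->; rewrite /ecomm /Lmul !(bil0l mul_bil, bil0r mul_bil) subrr scaler0.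
- by rewrite /g1op /dact /Lmul fb !(bil0l mul_bil, bil0r mul_bil) !subr0.
Qed.

End LiftLinear.

Section LiftBracket.
Variables (K : fieldType) (J V : lmodType K) (jmul : J -> J -> J) (vmul : V -> V -> V).
Variable f : {linear J -> V}.
Hypotheses (vmul_jordan : is_jordan vmul) (two_neq0 : (2%:R : K) != 0).
Hypothesis f_mul : {morph f : a b / jmul a b >-> vmul a b}.

Let vmul_bil := jordan_symbilinear vmul_jordan.
Let vmul_expand := (bilDl vmul_bil, bilDr vmul_bil, bilBl vmul_bil, bilBr vmul_bil,
  bilNl vmul_bil, bilNr vmul_bil, bilZl vmul_bil, bilZr vmul_bil).
Let scale_expand := (@scalerDr K V, @scalerN K V, @scalerA K V).
Local Notation innerJ := (inner jmul idfun).
Local Notation innerV := (inner vmul f).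

Lemma inner_f s x : innerV s (f x) = f (innerJ s x).
Proof.
rewrite /inner linear_sum; apply: eq_bigr => t _.
by rewrite linearZ /ecomm /Lmul (linearB f) /= !f_mul.
Qed.

Lemma g0op_f a s x : g0op vmul f a s (f x) = f (g0op jmul idfun a s x).
Proof. by rewrite /g0op inner_f linearD f_mul. Qed.

Lemma g1op_f2 b x y : g1op vmul f b (f x) (f y) = f (g1op jmul idfun b x y).
Proof. by rewrite /g1op /dact /Lmul /= !(linearB f) !f_mul. Qed.

Lemma inner_derivation s : is_derivation vmul (innerV s).
Proof.
elim: s => [|t s IH] x y.
  by rewrite !inner_nil (bil0l vmul_bil) (bil0r vmul_bil) addr0.
rewrite !inner_cons (ecommL_derivation vmul_jordan two_neq0) IH !vmul_expand !scale_expand.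
by zmodring.
Qed.

Definition inner_comm (s s' : seq (K * (J * J))) : seq (K * (J * J)) :=
  flatten [seq [:: (t.1, (innerJ s t.2.1, t.2.2)); (t.1, (t.2.1, innerJ s t.2.2))]
          | t <- s'].

Lemma ecomm_inner s s' v : ecomm (innerV s) (innerV s') v = innerV (inner_comm s s') v.
Proof.
have Dlin := inner_linear f vmul_bil s.
elim: s' => [|t s' IH]; first by rewrite /ecomm !inner_nil (linf0 Dlin) subrr.
have := derivation_ecomm_ecommL vmul_jordan (inner_derivation s) Dlin (f t.2.1) (f t.2.2) v.
rewrite !inner_f /ecomm /Lmul (linfB Dlin) => /(congr1 (fun w => t.1 *: w)) Dt.
move: IH; rewrite /inner_comm /= -/(inner_comm s s') !inner_cons /ecomm /Lmul => <-.
rewrite (linfD Dlin) (linfZ Dlin) (linfB Dlin) !scale_expand in Dt *.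
by apply: (eq_lincomb 1 0 0 Dt Dt Dt); zmodring.
Qed.

Lemma ecomm_g0op a s a' s' v :
  ecomm (g0op vmul f a s) (g0op vmul f a' s') v
  = g0op vmul f (innerJ s a' - innerJ s' a) ((1, (a, a')) :: inner_comm s s') v.
Proof.
have e1 := derivation_ecommL (inner_derivation s) (f a') v.
have e2 := derivation_ecommL (inner_derivation s') (f a) v.
have e3 := ecomm_inner s s' v.
move: e1 e2 e3; rewrite /ecomm /Lmul !inner_f => e1 e2 e3.
rewrite /g0op inner_cons /= scale1r (linearB f) !vmul_expand.
rewrite !(linfD (inner_linear f vmul_bil _)) /ecomm /Lmul.
by apply: (eq_lincomb 1 (-1) 1 e1 e2 e3); zmodring.
Qed.

Lemma g1op_f b u v : g1op vmul f b (f u) v = g0op vmul f (- jmul b u) [:: (1, (b, u))] v.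
Proof.
rewrite /g1op /g0op /dact /Lmul inner_cons inner_nil /= scale1r linearN f_mul.
by rewrite !vmul_expand /ecomm /Lmul; zmodring.
Qed.

Lemma dact_g0op a s b x y :
  dact (g0op vmul f a s) (g1op vmul f b) x y = g1op vmul f (innerJ s b - jmul a b) x y.
Proof.
have e1 := dact_L_LP vmul_jordan two_neq0 (f a) (f b) x y.
have e2 := derivation_dact vmul_jordan (inner_derivation s)
  (inner_linear f vmul_bil s) (f b) x y.
rewrite inner_f in e2.
rewrite (g1op_sub f vmul_bil) /g1op /= f_mul -e1 -e2 /dact /g0op.
by rewrite /Lmul !vmul_expand; zmodring.
Qed.

Definition ld_br (p q : lift_data J) : lift_data J :=
  let: LiftData u a s b := p in
  let: LiftData u' a' s' b' := q in
  LiftData (g0op jmul idfun a s u' - g0op jmul idfun a' s' u)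
    (innerJ s a' - innerJ s' a - jmul b u' + jmul b' u)
    ((1, (a, a')) :: inner_comm s s' ++ [:: (1, (b, u')); (-1, (b', u))])
    (innerJ s b' - jmul a b' - (innerJ s' b - jmul a' b)).

Lemma lift_br p q : tkk_br (lift vmul f p) (lift vmul f q) = lift vmul f (ld_br p q).
Proof.
case: p q => [u a s b] [u' a' s' b'].
apply: tkk_eq => [|x|x y] /=.
- by rewrite !g0op_f (linearB f).
- rewrite ecomm_g0op !g1op_f /g0op !(inner_cons, inner_cat, inner_nil) /=.
  by rewrite !(linearB f, linearD f, linearN f) !vmul_expand !scale1r scaleN1r; zmodring.
- by rewrite !dact_g0op [in RHS](g1op_sub f vmul_bil).
Qed.

Lemma lift_g1_compatible p q r :
  g1_compatible (lift vmul f p) (lift vmul f q) (lift vmul f r).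
Proof.
case: p q r => [u _ _ _] [_ _ _ b'] [_ _ _ b''] x y /=.
rewrite (funext (g1op_f b' u)) (funext (g1op_f b'' u)) !dact_g0op.
rewrite /g1op; congr (dact (Lmul vmul _) vmul x y).
rewrite /inner !big_cons !big_nil /= /ecomm /Lmul.
rewrite !(linearB f, linearD f, linearN f, linearZZ f, linear0 f, f_mul) !scale1r !vmul_expand.
by comm_normalize vmul (bilC vmul_bil) [:: f u; f b'; f b'']; zmodring.
Qed.

Lemma lift_inner_central s q : (forall x, innerJ s x = 0) ->
  tkk_br (lift vmul f (LiftData 0 0 s 0)) (lift vmul f q) = tkk_zero V.
Proof.
move=> s0; rewrite lift_br; case: q => u' a' s' b'.
have f0 := linear0 f; have inner_f0 s1 : f (innerJ s1 0) = 0.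
  by rewrite -inner_f f0 (linf0 (inner_linear f vmul_bil s1)).
apply: (lift_null vmul_bil) => /=; rewrite /g0op /=.
- by rewrite !(linearB f, linearD f, f_mul, s0, inner_f0) f0 !(bil0l vmul_bil, bil0r vmul_bil)
    subrr.
- by rewrite !(linearB f, linearD f, f_mul, s0, inner_f0) f0 !(bil0l vmul_bil, bil0r vmul_bil)
    !subrr add0r.
- by rewrite !(linearB f, f_mul, s0, inner_f0) f0 !(bil0l vmul_bil, bil0r vmul_bil) !subrr.
- move=> t; rewrite inE mem_cat !inE => /or3P[/eqP-> | | /orP[] /eqP->] /=; rewrite ?f0;
    try by [left | right].
  by case/flatten_mapP => t' _; rewrite !inE => /orP[] /eqP-> /=; rewrite s0 f0; [left|right].
Qed.

End LiftBracket.

(** * The Lie algebra of lifts *)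

Definition is_lift (K : fieldType) (J V : lmodType K) (vmul : V -> V -> V) (f : J -> V)
  (X : tkk V) : Prop :=
  exists p, X = lift vmul f p.

(* [vmul_bil] does not enter the carrier; it is a parameter so that the module
   structure can be declared on the type. *)
Definition lifts (K : fieldType) (J V : lmodType K) (vmul : V -> V -> V)
  (vmul_bil : symbilinear vmul) (f : {linear J -> V}) : Type :=
  {X : tkk V | is_lift vmul f X}.

HB.instance Definition _ K J V vmul vmul_bil f := gen_eqMixin (@lifts K J V vmul vmul_bil f).
HB.instance Definition _ K J V vmul vmul_bil f :=
  gen_choiceMixin (@lifts K J V vmul vmul_bil f).

Section LiftsModule.
Variables (K : fieldType) (J V : lmodType K) (vmul : V -> V -> V).
Variables (vmul_bil : symbilinear vmul) (f : {linear J -> V}).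
Local Notation L := (lifts vmul_bil f).

Lemma lifts_val_inj : injective (@proj1_sig _ _ : L -> tkk V).
Proof.
move=> [X pX] [Y pY] /= eXY; move: pX pY; rewrite eXY => pX pY.
by rewrite (Prop_irrelevance pX pY).
Qed.

Lemma is_lift_zero : is_lift vmul f (tkk_zero V).
Proof. by exists (LiftData 0 0 [::] 0); rewrite lift_zero. Qed.

Lemma is_lift_add X Y : is_lift vmul f X -> is_lift vmul f Y -> is_lift vmul f (tkk_add X Y).
Proof. by move=> [p ->] [q ->]; exists (ld_add p q); rewrite lift_add. Qed.

Lemma is_lift_scale c X : is_lift vmul f X -> is_lift vmul f (tkk_scale c X).
Proof. by move=> [p ->]; exists (ld_scale c p); rewrite lift_scale. Qed.

Definition lifts_zero : L := exist _ _ is_lift_zero.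
Definition lifts_add (x y : L) : L := exist _ _ (is_lift_add (svalP x) (svalP y)).
Definition lifts_scale c (x : L) : L := exist _ _ (is_lift_scale c (svalP x)).

Lemma lifts_addA : associative lifts_add.
Proof. by move=> x y z; apply: lifts_val_inj; rewrite /= tkk_addA. Qed.
Lemma lifts_addC : commutative lifts_add.
Proof. by move=> x y; apply: lifts_val_inj; rewrite /= tkk_addC. Qed.
Lemma lifts_add0 : left_id lifts_zero lifts_add.
Proof. by move=> x; apply: lifts_val_inj; rewrite /= tkk_add0. Qed.
Lemma lifts_addN : left_inverse lifts_zero (lifts_scale (-1)) lifts_add.
Proof. by move=> x; apply: lifts_val_inj; rewrite /= tkk_addN. Qed.

End LiftsModule.

HB.instance Definition _ K J V vmul vmul_bil f :=
  GRing.isZmodule.Build (@lifts K J V vmul vmul_bil f)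
    (@lifts_addA K J V vmul vmul_bil f) (@lifts_addC K J V vmul vmul_bil f)
    (@lifts_add0 K J V vmul vmul_bil f) (@lifts_addN K J V vmul vmul_bil f).

Section LiftsLmodule.
Variables (K : fieldType) (J V : lmodType K) (vmul : V -> V -> V).
Variables (vmul_bil : symbilinear vmul) (f : {linear J -> V}).
Local Notation L := (lifts vmul_bil f).

Lemma lifts_scaleA a b (x : L) : lifts_scale a (lifts_scale b x) = lifts_scale (a * b) x.
Proof. by apply: lifts_val_inj; rewrite /= tkk_scaleA. Qed.
Lemma lifts_scale1 : left_id 1 (@lifts_scale _ _ _ _ vmul_bil f).
Proof. by move=> x; apply: lifts_val_inj; rewrite /= tkk_scale1. Qed.
Lemma lifts_scaleDr : right_distributive (@lifts_scale _ _ _ _ vmul_bil f) +%R.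
Proof. by move=> a x y; apply: lifts_val_inj; rewrite /= tkk_scaleDr. Qed.
Lemma lifts_scaleDl (x : L) : {morph (@lifts_scale _ _ _ _ vmul_bil f)^~ x : a b / a + b}.
Proof. by move=> a b; apply: lifts_val_inj; rewrite /= tkk_scaleDl. Qed.

End LiftsLmodule.

HB.instance Definition _ (K : fieldType) (J V : lmodType K) vmul vmul_bil f :=
  GRing.Zmodule_isLmodule.Build K (@lifts K J V vmul vmul_bil f)
    (@lifts_scaleA K J V vmul vmul_bil f) (@lifts_scale1 K J V vmul vmul_bil f)
    (@lifts_scaleDr K J V vmul vmul_bil f) (@lifts_scaleDl K J V vmul vmul_bil f).

Section LiftsLie.
Variables (K : fieldType) (J V : lmodType K) (jmul : J -> J -> J) (vmul : V -> V -> V).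
Variable f : {linear J -> V}.
Hypotheses (vmul_jordan : is_jordan vmul) (two_neq0 : (2%:R : K) != 0).
Hypothesis f_mul : {morph f : a b / jmul a b >-> vmul a b}.

Let vmul_bil := jordan_symbilinear vmul_jordan.
Local Notation L := (lifts vmul_bil f).

Lemma is_lift_br X Y : is_lift vmul f X -> is_lift vmul f Y -> is_lift vmul f (tkk_br X Y).
Proof.
by move=> [p ->] [q ->]; exists (ld_br jmul p q); rewrite (lift_br vmul_jordan two_neq0 f_mul).
Qed.

Definition lifts_br (x y : L) : L := exist _ _ (is_lift_br (svalP x) (svalP y)).

Lemma lifts_val_linear (x : L) : tkk_linear (sval x).
Proof. by case: x => X /= [p ->]; apply: lift_linear. Qed.

Lemma lifts_brZDl c (x y z : L) : lifts_br (c *: x + y) z = c *: lifts_br x z + lifts_br y z.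
Proof. by apply: lifts_val_inj; apply: tkk_brZDl; apply: lifts_val_linear. Qed.

Lemma lifts_brZDr c (x y z : L) : lifts_br z (c *: x + y) = c *: lifts_br z x + lifts_br z y.
Proof. by apply: lifts_val_inj; apply: tkk_brZDr; apply: lifts_val_linear. Qed.

Lemma lifts_br_alt (x : L) : lifts_br x x = 0.
Proof. by apply: lifts_val_inj; apply: tkk_br_alt. Qed.

Lemma lifts_br_jacobi (x y z : L) :
  lifts_br x (lifts_br y z) + lifts_br y (lifts_br z x) + lifts_br z (lifts_br x y) = 0.
Proof.
apply: lifts_val_inj; case: x y z => [X [p eX]] [Y [q eY]] [Z [r eZ]] /=.
rewrite eX eY eZ; apply: tkk_br_jacobi; do ?exact: lift_linear;
  exact: lift_g1_compatible.
Qed.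

Definition lifts_lie : lieAlgType K :=
  LieAlg lifts_brZDl lifts_brZDr lifts_br_alt lifts_br_jacobi.

End LiftsLie.

(** * Lie(J) for a unital Jordan algebra J *)

Section Span.
Variables (K : fieldType) (V : lmodType K).

Lemma span1_gen (gens : (V -> V) -> Prop) D : gens D -> in_span1 gens D.
Proof.
by move=> gD; exists 1%N, (fun _ => 1), (fun _ => D); split=> // x; rewrite big_ord1 scale1r.
Qed.

Lemma span1_eq (gens : (V -> V) -> Prop) D1 D2 :
  D1 =1 D2 -> in_span1 gens D1 -> in_span1 gens D2.
Proof. by move=> eD [n [c [g [gens_g DE]]]]; exists n, c, g; split=> // x; rewrite -eD. Qed.

Lemma span1_zero (gens : (V -> V) -> Prop) : in_span1 gens (fun _ => 0).
Proof.
exists 0%N, (fun _ => 0), (fun _ _ => 0); split=> [i|x]; last by rewrite big_ord0.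
by case: i => m; rewrite ltn0.
Qed.

Lemma span1_addZ (gens : (V -> V) -> Prop) c D1 D2 :
  in_span1 gens D1 -> in_span1 gens D2 -> in_span1 gens (fun x => c *: D1 x + D2 x).
Proof.
move=> [n1 [c1 [g1 [gens1 D1E]]]] [n2 [c2 [g2 [gens2 D2E]]]].
exists (n1 + n2)%N, (fun i => match split i with inl j => c * c1 j | inr j => c2 j end),
  (fun i => match split i with inl j => g1 j | inr j => g2 j end).
split=> [i|x]; first by case: (split i).
rewrite big_split_ord D1E D2E scaler_sumr; congr (_ + _); apply: eq_bigr => j _.
- by rewrite (unsplitK (inl j)) scalerA.
- by rewrite (unsplitK (inr j)).
Qed.

End Span.

Lemma in_Lie_lift (K : fieldType) (J V : lmodType K) (mul : V -> V -> V) (f : J -> V) p :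
  in_Lie mul (lift mul f p).
Proof.
case: p => u a s b; split=> /=.
- have inner_span : in_span1 (g0_gen mul) (inner mul f s).
    elim: s => [|t s IH]; first by apply: span1_eq (span1_zero _) => x; rewrite inner_nil.
    apply: span1_eq (span1_addZ t.1 (span1_gen _) IH) => [x|]; first by rewrite inner_cons.
    by right; exists (f t.2.1), (f t.2.2).
  apply: span1_eq (span1_addZ 1 (span1_gen _) inner_span) => [x|]; last by left; exists (f a).
  by rewrite /g0op scale1r.
- exists 1%N, (fun _ => 1), (fun _ => g1op mul f b); split=> [_|x y].
    by right; exists (f b).
  by rewrite big_ord1 scale1r.
Qed.

Section UnitalTKK.
Variables (K : fieldType) (J : lmodType K) (mul : J -> J -> J) (e : J).
Hypotheses (mul_jordan : is_jordan mul) (e_unit : is_unit mul e).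

Let mul_bil := jordan_symbilinear mul_jordan.
Let mulC := bilC mul_bil.
Let mul_unitr x : mul x e = x.
Proof. by rewrite mulC e_unit. Qed.

Lemma g0op_of_span1 D : in_span1 (g0_gen mul) D -> exists a s, D =1 g0op mul idfun a s.
Proof.
case=> n [c [g [gens DE]]].
suff [a [s sumE]] : exists a s, forall x, \sum_(i < n) c i *: g i x = g0op mul idfun a s x.
  by exists a, s => x; rewrite DE sumE.
elim: n c g gens {DE} => [|n IH] c g gens.
  by exists 0, [::] => x; rewrite big_ord0 /g0op inner_nil (bil0l mul_bil) addr0.
have [a [s sumE]] := IH (fun i => c (widen_ord (leqnSn n) i))
  (fun i => g (widen_ord (leqnSn n) i)) (fun i => gens _).
case: (gens ord_max) => [[p gE] | [p [q gE]]].
- exists (c ord_max *: p + a), s => x.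
  by rewrite big_ord_recr /= sumE gE /g0op /Lmul (bil_linl mul_bil); zmodring.
- exists a, (rcons s (c ord_max, (p, q))) => x.
  by rewrite big_ord_recr /= sumE gE /g0op -cats1 inner_cat inner_cons inner_nil; zmodring.
Qed.

Lemma g1op_of_span2 Q :
  in_span2 (g1_gen mul) Q -> exists b, forall x y, Q x y = g1op mul idfun b x y.
Proof.
case=> n [c [g [gens QE]]].
suff [b sumE] : exists b, forall x y, \sum_(i < n) c i *: g i x y = g1op mul idfun b x y.
  by exists b => x y; rewrite QE sumE.
elim: n c g gens {QE} => [|n IH] c g gens.
  exists 0 => x y; rewrite big_ord0 /g1op /dact /Lmul.
  by rewrite !(bil0l mul_bil, bil0r mul_bil) !subr0.
have [b sumE] := IH (fun i => c (widen_ord (leqnSn n) i))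
  (fun i => g (widen_ord (leqnSn n) i)) (fun i => gens _).
have [p gE] : exists p, forall x y, g ord_max x y = g1op mul idfun p x y.
  case: (gens ord_max) => [gE | [p gE]]; last by exists p.
  (* P = [L_(-e), P], the unit acting as the identity *)
  exists (- e) => x y; rewrite gE /g1op /dact /Lmul /= !(bilNl mul_bil, bilNr mul_bil).
  by rewrite !e_unit; zmodring.
exists (c ord_max *: p + b) => x y.
by rewrite big_ord_recr /= sumE gE addrC (g1op_add _ mul_bil) (g1op_scale _ mul_bil).
Qed.

Lemma in_Lie_lift_id X : in_Lie mul X -> exists p, X = lift mul idfun p.
Proof.
case: X => [[u D] Q] [/= /g0op_of_span1 [a [s DE]] /g1op_of_span2 [b QE]].
by exists (LiftData u a s b); apply: tkk_eq.
Qed.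

Lemma inner_id_unit s : inner mul idfun s e = 0.
Proof.
rewrite /inner big1 // => t _.
by rewrite /ecomm /Lmul /= !mul_unitr mulC subrr scaler0.
Qed.

Lemma lift_id_eq0 p : lift mul idfun p = tkk_zero J ->
  [/\ ld_u p = 0, ld_a p = 0, ld_b p = 0 & forall x, inner mul idfun (ld_s p) x = 0].
Proof.
case: p => u a s b /= p0.
have a0 : a = 0.
  by have := congr1 (fun X => X.1.2 e) p0; rewrite /= /g0op inner_id_unit addr0 mul_unitr.
have b0 : b = 0.
  have := congr1 (fun X => X.2 e e) p0; rewrite /= /g1op /dact /Lmul /= !mul_unitr e_unit.
  by rewrite subrr sub0r => /eqP; rewrite oppr_eq0 => /eqP.
split=> // [|x]; first exact: (congr1 (fun X : tkk J => X.1.1) p0).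
by have := congr1 (fun X => X.1.2 x) p0; rewrite /= /g0op a0 (bil0l mul_bil) add0r.
Qed.

End UnitalTKK.

(** * The null split extension *)

Definition ext_in (K : fieldType) (J M : lmodType K) (a : J) : J * M := (a, 0).

Lemma ext_in_linear (K : fieldType) (J M : lmodType K) : linear (@ext_in K J M).
Proof. by move=> c a b; apply: injective_projections => /=; rewrite ?scaler0 ?addr0. Qed.

HB.instance Definition _ (K : fieldType) (J M : lmodType K) :=
  GRing.isLinear.Build K J (J * M)%type *:%R (@ext_in K J M) (@ext_in_linear K J M).

Section NullSplitExtension.
Variables (K : fieldType) (J M : lmodType K) (mul : J -> J -> J) (act : J -> M -> M).
Hypotheses (two_neq0 : (2%:R : K) != 0) (act_bimodule : is_bimodule mul act).

Local Notation nmul := (nse_mul mul act).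
Let nmul_bil := jordan_symbilinear act_bimodule.

Lemma act0r a : act a 0 = 0.
Proof.
have act00 : act 0 0 = 0.
  have := congr1 snd (bil0l nmul_bil (0, 0)); rewrite /nse_mul /= => act00.
  by apply: (twice_inj two_neq0); rewrite mul0rn mulr2n.
by have := congr1 snd (bil0l nmul_bil (a, 0)); rewrite /nse_mul /= act00 add0r.
Qed.

Lemma ext_in_mul : {morph @ext_in K J M : a b / mul a b >-> nmul a b}.
Proof. by move=> a b; rewrite /nse_mul /ext_in /= !act0r addr0. Qed.

Lemma tkk_proj_lift p : tkk_proj (lift nmul (@ext_in K J M) p) = lift mul idfun p.
Proof.
apply: tkk_eq => [//|x|x y]; cbn [fst snd tkk_proj lift].
  by rewrite -[(x, 0)]/(ext_in M x) (g0op_f ext_in_mul).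
by rewrite -[(x, 0)]/(ext_in M x) -[(y, 0)]/(ext_in M y) (g1op_f2 ext_in_mul).
Qed.

End NullSplitExtension.

Section LiftCentralExtension.
Variables (K : fieldType) (J M : lmodType K) (mul : J -> J -> J) (act : J -> M -> M).
Variable e : J.
Hypotheses (two_neq0 : (2%:R : K) != 0) (mul_jordan : is_jordan mul).
Hypotheses (e_unit : is_unit mul e) (act_bimodule : is_bimodule mul act).

Local Notation nmul := (nse_mul mul act).
Local Notation E := (lifts_lie act_bimodule two_neq0 (ext_in_mul two_neq0 act_bimodule)).

Definition lifts_proj (x : E) : tkk J := tkk_proj (sval x).

Lemma lifts_proj_br (x y : E) :
  lifts_proj (lie_br E x y) = tkk_br (lifts_proj x) (lifts_proj y).
Proof.
case: x y => [X [p eX]] [Y [q eY]].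
change (tkk_proj (tkk_br X Y) = tkk_br (tkk_proj X) (tkk_proj Y)).
rewrite eX eY (lift_br act_bimodule two_neq0 (ext_in_mul two_neq0 act_bimodule)).
rewrite !(tkk_proj_lift two_neq0 act_bimodule).
exact/esym/(lift_br mul_jordan two_neq0 (f := idfun)).
Qed.

Lemma lifts_proj_central : central_ext mul lifts_proj.
Proof.
split; first split.
- by [].
- case=> X [p eX]; rewrite /lifts_proj /= eX (tkk_proj_lift two_neq0 act_bimodule).
  exact: in_Lie_lift.
- exact: lifts_proj_br.
- move=> X /(in_Lie_lift_id mul_jordan e_unit) [p ->].
  by exists (exist _ (lift nmul (@ext_in K J M) p) (ex_intro _ p erefl)); apply: tkk_proj_lift.
- move=> [Z [p eZ]] Z0 y.
  have : lift mul idfun p = tkk_zero J.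
    by rewrite -(tkk_proj_lift two_neq0 act_bimodule) -eZ; exact: Z0.
  case/(lift_id_eq0 mul_jordan e_unit) => u0 a0 b0 s0.
  apply: lifts_val_inj; case: y => Y [q eY].
  change (tkk_br Z Y = tkk_zero _); rewrite eZ eY.
  case: p {eZ Z0} u0 a0 b0 s0 => u a s b /= -> -> -> s0.
  exact: (lift_inner_central act_bimodule two_neq0 (ext_in_mul two_neq0 act_bimodule)).
Qed.

End LiftCentralExtension.

Theorem mainTheorem7 (K : fieldType) (J : lmodType K) (mul : J -> J -> J) (e : J)
  (M : lmodType K) (act : J -> M -> M) (G : lieAlgType K) (gamma : G -> tkk J) :
  (2%:R : K) != 0 ->
  is_jordan mul -> is_unit mul e ->
  is_bimodule mul act -> (forall m : M, act e m = m) ->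
  universal_central_ext mul gamma ->
  exists s : G -> tkk (J * M)%type,
    tkk_hom (nse_mul mul act) s /\ forall x, tkk_proj (s x) = gamma x.
Proof.
move=> two_neq0 mul_jordan e_unit act_bimodule _ [_ gamma_universal].
have [g [[g_lin g_br] g_proj _]] :=
  gamma_universal _ _ (lifts_proj_central two_neq0 mul_jordan e_unit act_bimodule).
exists (fun x => sval (g x)); split=> //; split=> [c x y|x|x y].
- by rewrite g_lin.
- by case: (g x) => X [p eX]; rewrite /= eX; apply: in_Lie_lift.
- by rewrite g_br.
Qed.
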